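(* Let $\mathbb X$ be a multi-sorted topological structure in the signature of $\underset{\sim}{\mathbf M}_n$ with sorts $X_0,\dots,X_n$ satisfying (A4) for all $1\le j<k\le n$ and all $x,y\in X_j$, $u,v\in X_k$: if $x\leqslant^j y$, $y\leqslant^{jk}u$, $u\leqslant^k v$ then $x\leqslant^{jk}v$; and (A5) for all $1\le j<k<\ell\le n$ and $x\in X_j,y\in X_k,z\in X_\ell$: if $x\leqslant^{jk}y$ and $y\leqslant^{k\ell}z$ then $x\leqslant^{j\ell}z$. Then the conjunction of (A6) $\langle X_k;\leqslant^k,\mathscr T_k\rangle$ is a Priestley space for all $k\in[0,n]$, and (A7) for all $1\le j<k\le n$ and all $x\in X_j$, $y\in X_k$ with $x\not\leqslant^{jk}y$ there exist mutually increasing sets $U_j,\dots,U_k$, with $U_\ell$ a clopen up-set of $\langle X_\ell;\leqslant^\ell,\mathscr T_\ell\rangle$ for each $\ell\in[j,k]$, such that $x\in U_j$ and $y\in X_k\setminus U_k$, is equivalent to the conjunction of the following four conditions: (A6$^0$) $\langle X_0;\leqslant^0,\mathscr T_0\rangle$ is a Priestley space; (A6$'$) $\leqslant^k$ is a partial order on $X_k$ for all $k\in[1,n]$; (A6$''$) $\langle X_k;\mathscr T_k\rangle$ is compact for all $k\in[1,n]$; (A7$'$) for all $j,k\in[1,n]$ with $j\le k$ and all $x\in X_j$, $y\in X_k$ with $x\not\leqslant^{jk}y$ there exist mutually increasing sets $U_j,\dots,U_k$, with $U_\ell$ a clopen up-set of $\langle X_\ell;\leqslant^\ell,\mathscr T_\ell\rangle$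 for each $\ell\in[j,k]$, such that $x\in U_j$ and $y\in X_k\setminus U_k$.
   Context: Fix an integer $n\ge 1$ and write $[m,p]=\{i\in\mathbb Z:m\le i\le p\}$. A multi-sorted topological structure in the signature of $\underset{\sim}{\mathbf M}_n$ consists of pairwise disjoint topological spaces $X_0,\dots,X_n$ (with $\mathscr T_k$ the topology of $X_k$, and $X=X_0\cup\dots\cup X_n$ carrying the disjoint-union topology), maps $g_k\colon X_k\to X_0$ ($k\in[1,n]$), and binary relations $\leqslant^k\subseteq X_k\times X_k$ ($k\in[0,n]$) and $\leqslant^{jk}\subseteq X_j\times X_k$ ($1\le j<k\le n$). Write ${\leqslant^{kk}}:={\leqslant^k}$ for $k\in[1,n]$. A subset $U\subseteq X_\ell$ is an up-set of $\langle X_\ell;\leqslant^\ell\rangle$ if $x\in U$ and $x\leqslant^\ell y$ imply $y\in U$. For $j\le k$ in $[1,n]$ and $U_\ell\subseteq X_\ell$ ($\ell\in[j,k]$), the sets $U_j,\dots,U_k$ are mutually increasing if for all $i\le\ell$ in $[j,k]$, whenever $x\in U_i$, $y\in X_\ell$ and $x\leqslant^{i\ell}y$, then $y\in U_\ell$. A Priestley space is an ordered topological space that is compact and totally order-disconnected (for $x\not\le y$ there is a clopen up-set containing $x$ but not $y$). *)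

From mathcomp Require Import all_boot all_order.
From mathcomp Require Import all_classical all_reals all_analysis.
Set Implicit Arguments. Unset Strict Implicit. Unset Printing Implicit Defensive.
Local Open Scope classical_set_scope.

(* Sorts X_0, ..., X_n are given as a family [X : nat -> topologicalType]
   (only indices 0..n are used).  All binary relations are packaged as one
   family [R j k : X j -> X k -> Prop]:  R k k is <=^k (k in [0,n]) and
   R j k for 1 <= j < k <= n is <=^{jk}.  Other entries are never used. *)

Definition partial_order (T : Type) (le : T -> T -> Prop) : Prop :=
  (forall x, le x x) /\
  (forall x y, le x y -> le y x -> x = y) /\
  (forall x y z, le x y -> le y z -> le x z).

Definition is_upset (T : Type) (le : T -> T -> Prop) (U : set T) : Prop :=
  forall x y, U x -> le x y -> U y.

Definition priestley (T : topologicalType) (le : T -> T -> Prop) : Prop :=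
  partial_order le /\ compact [set: T] /\
  (forall x y, ~ le x y ->
     exists U : set T, clopen U /\ is_upset le U /\ U x /\ ~ U y).

Definition mutually_increasing (X : nat -> Type)
  (R : forall j k, X j -> X k -> Prop) (j k : nat)
  (U : forall l, set (X l)) : Prop :=
  forall i l, (j <= i)%N -> (i <= l)%N -> (l <= k)%N ->
    forall (x : X i) (y : X l), U i x -> R i l x y -> U l y.

Definition separation (X : nat -> topologicalType)
  (R : forall j k, X j -> X k -> Prop) (j k : nat) : Prop :=
  forall (x : X j) (y : X k), ~ R j k x y ->
    exists U : forall l, set (X l),
      mutually_increasing R j k U /\
      (forall l, (j <= l)%N -> (l <= k)%N -> clopen (U l) /\ is_upset (R l l) (U l)) /\
      U j x /\ ~ U k y.

From mathcomp Require Import all_boot all_order.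
From mathcomp Require Import all_classical all_reals all_analysis.
Local Open Scope classical_set_scope.

(* (A6) and (A7') both contain the case j < k of the separation
   condition, and the remaining case j = k of (A7') says no more than that
   the ordered space X_k is totally order-disconnected, since a family
   U_k, ..., U_k of mutually increasing sets is a single up-set of X_k.
   Hence (A6) for k >= 1 splits into (A6'), (A6'') and the diagonal case of
   (A7'). *)

Section DiagonalSeparation.

Context {X : nat -> topologicalType} (R : forall j k, X j -> X k -> Prop).

(* At a sort [l <> k] the condition is vacuous and the set is the whole sort;
   only the value at [k] is ever used. *)
Definition family_at (k : nat) (U : set (X k)) : forall l, set (X l) :=
  fun l => [set z | forall e : l = k, U (eq_rect l X z k e)].
Arguments family_at {k} U l.

Lemma family_atE (k : nat) (U : set (X k)) : family_at U k = U.
Proof.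
apply/funext => z; apply/propext; split; first by move/(_ erefl).
by move=> Uz e; rewrite (eq_axiomK e).
Qed.

Lemma family_at_mutually_increasing (k : nat) (U : set (X k)) :
  is_upset (R k k) U -> mutually_increasing R k k (family_at U).
Proof.
move=> upU i l ki il lk.
have -> : i = k by apply/eqP; rewrite eqn_leq (leq_trans il lk) ki.
have -> : l = k by apply/eqP; rewrite eqn_leq lk (leq_trans ki il).
by rewrite family_atE; exact: upU.
Qed.

Lemma separation_diagP (k : nat) :
  separation R k k <->
  (forall x y : X k, ~ R k k x y ->
     exists U : set (X k), clopen U /\ is_upset (R k k) U /\ U x /\ ~ U y).
Proof.
split=> sep x y nxy.
- have [U [_ [clU [Ux nUy]]]] := sep x y nxy.
  have [cl up] := clU k (leqnn k) (leqnn k).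
  by exists (U k).
- have [U [cl [up [Ux nUy]]]] := sep x y nxy.
  exists (family_at U); split; first exact: family_at_mutually_increasing.
  split; last by rewrite family_atE.
  move=> l kl lk; have -> : l = k by apply/eqP; rewrite eqn_leq lk kl.
  by rewrite family_atE.
Qed.

Lemma priestley_separationP (k : nat) :
  priestley (R k k) <->
  [/\ partial_order (R k k), compact [set: X k] & separation R k k].
Proof.
split=> [[po [cpt sep]]|[po cpt /separation_diagP sep]] //.
by split=> //; apply/separation_diagP.
Qed.

End DiagonalSeparation.

Theorem lemma4p3 (n : nat) (hn : (1 <= n)%N) (X : nat -> topologicalType)
  (g : forall k : nat, X k -> X 0%N)
  (R : forall j k : nat, X j -> X k -> Prop)
  (A4 : forall j k : nat, (1 <= j)%N -> (j < k)%N -> (k <= n)%N ->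
     forall (x y : X j) (u v : X k),
       R j j x y -> R j k y u -> R k k u v -> R j k x v)
  (A5 : forall j k l : nat, (1 <= j)%N -> (j < k)%N -> (k < l)%N -> (l <= n)%N ->
     forall (x : X j) (y : X k) (z : X l),
       R j k x y -> R k l y z -> R j l x z) :
  ((forall k : nat, (k <= n)%N -> priestley (R k k)) /\
   (forall j k : nat, (1 <= j)%N -> (j < k)%N -> (k <= n)%N -> separation R j k))
  <->
  (priestley (R 0%N 0%N) /\
   (forall k : nat, (1 <= k)%N -> (k <= n)%N -> partial_order (R k k)) /\
   (forall k : nat, (1 <= k)%N -> (k <= n)%N -> compact [set: X k]) /\
   (forall j k : nat, (1 <= j)%N -> (j <= k)%N -> (k <= n)%N -> separation R j k)).
Proof.
split=> [[pri sep]|[pri0 [po [cpt sep]]]].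
- have priE k kn := (priestley_separationP R k).1 (pri k kn).
  split; first exact: pri.
  split; first by move=> k _ kn; case: (priE k kn).
  split; first by move=> k _ kn; case: (priE k kn).
  move=> j k j1; rewrite leq_eqVlt => /orP[/eqP <- jn|jk kn].
  + by case: (priE j jn).
  + exact: sep.
- split=> [[|k] kn|j k j1 jk kn]; first exact: pri0.
  + by apply/priestley_separationP; split; [exact: po|exact: cpt|exact: sep].
  + by apply: sep => //; exact: ltnW.
Qed.
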